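(* Let $\alpha\in\mathbb Z^n$ and let $\mathcal S\subseteq\mathbb R^n$ be a convex set such that $\mathrm{conv}(\mathcal S\cap\mathbb Z^n)$ is the nonempty polyhedron $\mathcal P=\{x\in\mathbb R^n: Ax\le b\}$ with $A\in\mathbb Z^{m\times n}$ (rows $a_1^T,\dots,a_m^T$) and $b\in\mathbb R^m$. Assume $\mathrm{rec.cone}(\mathcal S)=\{x: Ax\le 0\}$ and $\inf\{\alpha^Tx: x\in\mathcal S\}>-\infty$. Define $b'_i=\sup\{a_i^Tx: x\in\mathcal S\}$ for $i=1,\dots,m$ and assume every $b'_i$ is finite. Then $$\inf\{\alpha^Tx:x\in\mathcal S\cap\mathbb Z^n\}-\inf\{\alpha^Tx:x\in\mathcal S\}\le n\|\alpha\|_1\Delta\,(1+\|b-b'\|_\infty),$$ where $\Delta$ is the largest absolute value of a determinant of a square submatrix of $A$.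
   Context: $\mathrm{rec.cone}(\mathcal S)=\{d: x+\lambda d\in\mathcal S\ \forall\lambda\ge0,\ \forall x\in\mathcal S\}$; $\mathrm{conv}$ denotes convex hull. *)

From HB Require Import structures.
From mathcomp Require Import all_boot all_order all_algebra.
From mathcomp Require Import all_classical all_reals.
Set Implicit Arguments. Unset Strict Implicit. Unset Printing Implicit Defensive.
Import Order.TTheory GRing.Theory Num.Theory.
Local Open Scope classical_set_scope.
Local Open Scope ring_scope.

Definition mxR {R : realType} {p q : nat} (M : 'M[int]_(p, q)) : 'M[R]_(p, q) :=
  map_mx (fun z : int => z%:~R) M.

Definition Zpts {R : realType} (n : nat) : set 'cV[R]_n :=
  [set x | exists z : 'cV[int]_n, x = mxR z].

Definition convex_set {R : realType} (n : nat) (S : set 'cV[R]_n) : Prop :=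
  forall x y, S x -> S y -> forall t : R, 0 <= t <= 1 ->
    S (t *: x + (1 - t) *: y).

Definition conv {R : realType} (n : nat) (T : set 'cV[R]_n) : set 'cV[R]_n :=
  [set x | exists (k : nat) (w : 'I_k -> R) (p : 'I_k -> 'cV[R]_n),
     [/\ (forall i, 0 <= w i), \sum_(i < k) w i = 1,
         (forall i, T (p i)) & x = \sum_(i < k) w i *: p i]].

Definition rec_cone {R : realType} (n : nat) (S : set 'cV[R]_n) : set 'cV[R]_n :=
  [set d | forall (lam : R) x, 0 <= lam -> S x -> S (x + lam *: d)].

Definition polyhedron {R : realType} (m n : nat) (A : 'M[R]_(m, n)) (b : 'cV[R]_m)
  : set 'cV[R]_n :=
  [set x | forall i, (A *m x) i 0 <= b i 0].

Definition lin {R : realType} (n : nat) (c x : 'cV[R]_n) : R := (c^T *m x) 0 0.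

Definition Delta (m n : nat) (A : 'M[int]_(m, n)) : nat :=
  \max_(k < minn m n)
    \max_(f : {ffun 'I_k.+1 -> 'I_m} | injectiveb f)
      \max_(g : {ffun 'I_k.+1 -> 'I_n} | injectiveb g)
        `|\det (mxsub f g A)|%N.

Definition norm1 {R : realType} (n : nat) (v : 'cV[R]_n) : R :=
  \sum_(i < n) `|v i 0|.
Definition norminf {R : realType} (n : nat) (v : 'cV[R]_n) : R :=
  \big[Num.max/0]_(i < n) `|v i 0|.

(* Every point of P is a convex
   combination of integer points of S, so the integer optimum v bounds alpha^T from below on P.
   LP duality (obtained from Fourier-Motzkin elimination) then yields u >= 0 with A^T u = -alpha
   and b^T u <= -v; moving u along its left kernel until a coordinate vanishes, we may assume
   that u is supported on linearly independent rows of A, and Cramer's rule on an invertible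
   square submatrix gives sum_i u_i <= n Delta ||alpha||_1.  For x in S, A x <= b' and hence
   alpha^T x = - u^T A x >= - u^T b' >= - u^T b - ||b - b'||_oo sum_i u_i
             >= v - n ||alpha||_1 Delta ||b - b'||_oo. *)

From HB Require Import structures.
From mathcomp Require Import all_boot all_order all_algebra.
From mathcomp Require Import all_classical all_reals.
From mathcomp Require Import lra zify.
Import Order.TTheory GRing.Theory Num.Theory.
Local Open Scope ring_scope.
Set Implicit Arguments. Unset Strict Implicit. Unset Printing Implicit Defensive.

Section LinearFunctional.
Variables (R : realType) (n : nat).
Implicit Types (a c y z : 'cV[R]_n) (t : R).

Lemma linE a y : lin a y = \sum_i a i 0 * y i 0.
Proof. by rewrite /lin mxE; apply: eq_bigr => i _; rewrite mxE. Qed.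

Lemma linDr a y z : lin a (y + z) = lin a y + lin a z.
Proof. by rewrite /lin mulmxDr mxE. Qed.

Lemma linZr a t y : lin a (t *: y) = t * lin a y.
Proof. by rewrite /lin -scalemxAr mxE. Qed.

Lemma linNr a y : lin a (- y) = - lin a y.
Proof. by rewrite /lin mulmxN mxE. Qed.

Lemma linDl a c y : lin (a + c) y = lin a y + lin c y.
Proof. by rewrite /lin linearD /= mulmxDl mxE. Qed.

Lemma linZl t a y : lin (t *: a) y = t * lin a y.
Proof. by rewrite /lin linearZ /= -scalemxAl mxE. Qed.

Lemma linNl a y : lin (- a) y = - lin a y.
Proof. by rewrite /lin linearN /= mulNmx mxE. Qed.

Lemma lin0l y : lin 0 y = 0.
Proof. by rewrite /lin linear0 mul0mx mxE. Qed.

Lemma lin0r a : lin a 0 = 0.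
Proof. by rewrite /lin mulmx0 mxE. Qed.

Lemma lin_delta a j : lin a (delta_mx j 0) = a j 0.
Proof. by rewrite /lin -colE !mxE. Qed.

Lemma lin_sumr k a (w : 'I_k -> R) (p : 'I_k -> 'cV[R]_n) :
  lin a (\sum_i w i *: p i) = \sum_i w i * lin a (p i).
Proof. by rewrite /lin mulmx_sumr summxE; apply: eq_bigr => i _; rewrite -scalemxAr mxE. Qed.

Lemma lin_row m (M : 'M[R]_(m, n)) i y : lin (row i M)^T y = (M *m y) i 0.
Proof. by rewrite /lin trmxK -row_mul mxE. Qed.

Lemma lin_col_mx a t (z : 'cV[R]_(n + 1)) :
  lin (col_mx a t%:M) z = lin a (usubmx z) + t * dsubmx z 0 0.
Proof.
rewrite -{1}(vsubmxK z) /lin tr_col_mx mul_row_col mxE; congr (_ + _).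
by rewrite tr_scalar_mx mul_scalar_mx mxE.
Qed.

End LinearFunctional.

Lemma seq_separation (R : realType) (L U : seq R) :
  (forall l u, l \in L -> u \in U -> l <= u) ->
  exists t, (forall l, l \in L -> l <= t) /\ (forall u, u \in U -> t <= u).
Proof.
elim: L => [|l L IH] LU.
  elim: U {LU} => [|u U [t [_ tU]]]; first by exists 0.
  exists (Num.min u t); split=> // v; rewrite inE => /orP[/eqP->|/tU tv].
    by rewrite ge_min lexx.
  by rewrite ge_min tv orbT.
have [|t [Lt tU]] := IH; first by move=> l' u l'L uU; apply: LU; rewrite ?inE ?l'L ?orbT.
exists (Num.max l t); split => [l'|u uU].
  by rewrite inE => /orP[/eqP->|/Lt l't]; rewrite le_max ?lexx ?l't ?orbT.
by rewrite ge_max tU // andbT LU // inE eqxx.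
Qed.

Section FourierMotzkin.
Variables (R : realType) (N : nat).

(* The pair [(a, beta)] stands for the inequality [lin a y <= beta]. *)
Definition ineq := ('cV[R]_N * R)%type.

Definition holds (y : 'cV[R]_N) (p : ineq) := lin p.1 y <= p.2.

Definition feasible (s : seq ineq) := exists y, forall p, p \in s -> holds y p.

Inductive ineq_cone (s : seq ineq) : ineq -> Prop :=
| ineq_cone_mem p : p \in s -> ineq_cone s p
| ineq_coneD p q : ineq_cone s p -> ineq_cone s q -> ineq_cone s (p.1 + q.1, p.2 + q.2)
| ineq_coneZ t p : 0 <= t -> ineq_cone s p -> ineq_cone s (t *: p.1, t * p.2).

Lemma ineq_cone_trans s s' q :
  (forall p, p \in s' -> ineq_cone s p) -> ineq_cone s' q -> ineq_cone s q.
Proof.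
by move=> s's; elim=> // [p p' _ ? _ ?|t p ? _ ?]; [apply: ineq_coneD|apply: ineq_coneZ].
Qed.

(* Cancels coordinate [j] when [p.1 j 0 > 0 > q.1 j 0]. *)
Definition elim_comb (j : 'I_N) (p q : ineq) : ineq :=
  ((- q.1 j 0) *: p.1 + p.1 j 0 *: q.1, (- q.1 j 0) * p.2 + p.1 j 0 * q.2).

Definition fm_elim (j : 'I_N) (s : seq ineq) : seq ineq :=
  [seq p <- s | (p : ineq).1 j 0 == 0] ++
  [seq elim_comb j p q | p <- [seq p <- s | 0 < (p : ineq).1 j 0],
                          q <- [seq q <- s | (q : ineq).1 j 0 < 0]].

Lemma fm_elim_cone j s p : p \in fm_elim j s -> ineq_cone s p.
Proof.
rewrite mem_cat => /orP[|/allpairsP[[p' q] /=]].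
  by rewrite mem_filter => /andP[_ ps]; apply: ineq_cone_mem.
rewrite !mem_filter => -[/andP[p'j p's] /andP[qj qs] ->].
apply: (@ineq_coneD _ (- q.1 j 0 *: p'.1, - q.1 j 0 * p'.2) (p'.1 j 0 *: q.1, p'.1 j 0 * q.2));
  by apply: ineq_coneZ; rewrite ?oppr_ge0 ?ltW //; apply: ineq_cone_mem.
Qed.

Lemma holds_shift y j t (p : ineq) :
  holds (y + t *: delta_mx j 0) p = (lin p.1 y + t * p.1 j 0 <= p.2).
Proof. by rewrite /holds linDr linZr lin_delta. Qed.

(* A solution of [fm_elim j s] lifts by changing only its coordinate [j]. *)
Lemma fm_elim_feasible j s : feasible (fm_elim j s) -> feasible s.
Proof.
move=> [y ys].
pose r (p : ineq) := (p.2 - lin p.1 y) / p.1 j 0.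
pose L := [seq r q | q <- [seq q <- s | (q : ineq).1 j 0 < 0]].
pose U := [seq r p | p <- [seq p <- s | 0 < (p : ineq).1 j 0]].
have [|t [Lt tU]] := @seq_separation R L U.
  move=> _ _ /mapP[q qs ->] /mapP[p ps ->].
  move: qs ps; rewrite !mem_filter => /andP[qj qs] /andP[pj ps].
  have : holds y (elim_comb j p q).
    by apply: ys; rewrite mem_cat orbC; apply/orP; left; apply/allpairsP; exists (p, q);
      rewrite !mem_filter ?qj ?pj ?qs ?ps.
  rewrite /holds linDl !linZl /= => comb.
  rewrite /r ler_pdivlMr // mulrAC ler_ndivrMr //; nra.
exists (y + t *: delta_mx j 0) => p ps; rewrite holds_shift.
case: (ltgtP (p.1 j 0) 0) => pj.
- have : r p <= t by apply: Lt; apply: map_f; rewrite mem_filter pj.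
  by rewrite ler_ndivrMr //; lra.
- have : t <= r p by apply: tU; apply: map_f; rewrite mem_filter pj.
  by rewrite ler_pdivlMr //; lra.
- by rewrite pj mulr0 addr0; apply: ys; rewrite mem_cat mem_filter pj eqxx ps.
Qed.

Lemma fm_elim_vanish k (s : seq ineq) (lt_kN : (k < N)%N) :
  (forall p, p \in s -> forall j : 'I_N, (k < j)%N -> p.1 j 0 = 0) ->
  forall p, p \in fm_elim (Ordinal lt_kN) s -> forall j : 'I_N, (k <= j)%N -> p.1 j 0 = 0.
Proof.
move=> s0 p; rewrite mem_cat => /orP[|/allpairsP[[p' q] /=]] pin j kj.
  move: pin; rewrite mem_filter => /andP[/eqP p0 ps].
  case: (ltnP k j) => [|jk]; first exact: s0.
  by have -> : j = Ordinal lt_kN by apply/val_inj => /=; lia.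
move: pin; rewrite !mem_filter => -[/andP[_ p's] /andP[_ qs] ->]; rewrite /elim_comb /= !mxE.
case: (ltnP k j) => [kj'|jk]; first by rewrite (s0 p' p's j kj') (s0 q qs j kj') !mulr0 addr0.
have -> : j = Ordinal lt_kN by apply/val_inj => /=; lia.
by rewrite mulrC mulrN addrC subrr.
Qed.

Lemma fm_infeasible k (s : seq ineq) :
  (forall p, p \in s -> forall j : 'I_N, (k <= j)%N -> p.1 j 0 = 0) ->
  ~ feasible s -> exists2 beta, beta < 0 & ineq_cone s (0, beta).
Proof.
elim: k s => [|k IH] s s0 infeas.
  have [p ps p0] : exists2 p, p \in s & ~ holds 0 p.
    by apply: contra_notP infeas => all0; exists 0 => p ps; apply: contra_notP all0; exists p.
  have p10 : p.1 = 0 by apply/matrixP => i j; rewrite (ord1 j) (s0 p ps) // mxE.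
  exists p.2; first by move: p0; rewrite /holds lin0r => /negP; rewrite -ltNge.
  by rewrite -p10 -surjective_pairing; apply: ineq_cone_mem.
case: (ltnP k N) => [lt_kN|]; last first.
  by move=> Nk; apply: IH infeas => p ps j kj; apply: s0 => //; have := ltn_ord j; lia.
have [beta beta0 cone_elim] :=
  IH _ (fm_elim_vanish s0) (fun feas => infeas (fm_elim_feasible feas)).
by exists beta => //; apply: ineq_cone_trans cone_elim => p /fm_elim_cone.
Qed.

Lemma ineq_cone_map (I : finType) (F : I -> ineq) q :
  ineq_cone [seq F i | i <- enum I] q ->
  exists w : I -> R, [/\ forall i, 0 <= w i,
    q.1 = \sum_i w i *: (F i).1 & q.2 = \sum_i w i * (F i).2].
Proof.
elim=> [p /mapP[i _ ->]|p p' _ [w [w0 -> ->]] _ [w' [w'0 -> ->]]|t p t0 _ [w [w0 -> ->]]].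
- exists (fun l => (l == i)%:R); split => [l|/=|/=]; first by rewrite ler0n.
    by rewrite (bigD1 i) //= eqxx scale1r big1 ?addr0 // => l /negPf ->; rewrite scale0r.
  by rewrite (bigD1 i) //= eqxx mul1r big1 ?addr0 // => l /negPf ->; rewrite mul0r.
- exists (fun l => w l + w' l); split => [l|/=|/=]; first by rewrite addr_ge0.
    by rewrite -big_split; apply: eq_bigr => l _; rewrite scalerDl.
  by rewrite -big_split; apply: eq_bigr => l _; rewrite mulrDl.
- exists (fun l => t * w l); split => [l|/=|/=]; first by rewrite mulr_ge0.
    by rewrite scaler_sumr; apply: eq_bigr => l _; rewrite scalerA.
  by rewrite mulr_sumr; apply: eq_bigr => l _; rewrite mulrA.
Qed.

Lemma farkas (I : finType) (F : I -> ineq) :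
  ~ (exists y, forall i, holds y (F i)) ->
  exists w : I -> R, [/\ forall i, 0 <= w i,
    \sum_i w i *: (F i).1 = 0 & \sum_i w i * (F i).2 < 0].
Proof.
move=> infeas; have [beta beta0 /ineq_cone_map[w [w0 sum1 sum2]]] :
    exists2 beta, beta < 0 & ineq_cone [seq F i | i <- enum I] (0, beta).
  apply: (@fm_infeasible N) => [p _ j|[y ys]]; first by have := ltn_ord j; lia.
  by apply: infeas; exists y => i; apply: ys; rewrite map_f ?mem_enum.
by exists w; split; rewrite -?sum1 -?sum2.
Qed.

End FourierMotzkin.

Section Duality.
Local Open Scope classical_set_scope.
Variables (R : realType) (m n : nat) (A : 'M[R]_(m, n)) (b : 'cV[R]_m).
Hypothesis P_nonempty : polyhedron A b !=set0.
Variables (c : 'cV[R]_n) (d : R).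
Hypothesis c_le_d : forall y, polyhedron A b y -> lin c y <= d.

Lemma lin_recession_le0 y : (forall i, (A *m y) i 0 <= 0) -> lin c y <= 0.
Proof.
move=> Ay0; have [y0 Py0] := P_nonempty; rewrite leNgt; apply/negP => cy0.
have cy0_le_d := c_le_d Py0.
pose t := (d - lin c y0 + 1) / lin c y.
have t0 : 0 <= t by rewrite divr_ge0 ?ltW //; lra.
have : polyhedron A b (y0 + t *: y).
  move=> i; rewrite mulmxDr -scalemxAr [X in X <= _]mxE [X in _ + X <= _]mxE.
  by have := Py0 i; have := mulr_ge0_le0 t0 (Ay0 i); lra.
move=> /c_le_d; rewrite linDr linZr /t mulfVK ?gt_eqF //; lra.
Qed.

(* Homogenisation in [z = (y, tau)]: [A y + b tau <= 0], [tau <= 0], [c y + d tau >= 1]. *)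
Definition dual_system (k : 'I_m + bool) : ineq R (n + 1) :=
  match k with
  | inl i => (col_mx (row i A)^T (b i 0)%:M, 0)
  | inr true => (col_mx 0 1%:M, 0)
  | inr false => (- col_mx c d%:M, -1)
  end.

Lemma dual_system_infeasible : ~ exists z, forall k, holds z (dual_system k).
Proof.
move=> [z zsol]; set y := usubmx z; set tau := dsubmx z 0 0.
have Ayb i : (A *m y) i 0 + b i 0 * tau <= 0.
  by have := zsol (inl i); rewrite /holds /= lin_col_mx lin_row.
have tau0 : tau <= 0.
  by have := zsol (inr true); rewrite /holds /= lin_col_mx lin0l add0r mul1r.
have cyd : 1 <= lin c y + d * tau.
  have := zsol (inr false); rewrite /holds /= linNl lin_col_mx.
  by rewrite lerN2.
case: (ltgtP tau 0) tau0 => // [tau_lt0 _|tau_eq0 _].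
- have : polyhedron A b ((- tau)^-1 *: y).
    move=> i; rewrite -scalemxAr mxE ler_pdivrMl ?oppr_gt0 //.
    by have := Ayb i; lra.
  move/c_le_d; rewrite linZr ler_pdivrMl ?oppr_gt0 //; nra.
- have : lin c y <= 0 by apply: lin_recession_le0 => i; have := Ayb i; rewrite tau_eq0 mulr0 addr0.
  by move: cyd; rewrite tau_eq0 mulr0 addr0; lra.
Qed.

Lemma mulmx_tr_sum (u : 'cV[R]_m) : A^T *m u = \sum_i u i 0 *: (row i A)^T.
Proof.
apply: trmx_inj; rewrite trmx_mul trmxK mulmx_sum_row linear_sum.
by apply: eq_bigr => i _; rewrite linearZ /= trmxK mxE.
Qed.

Theorem affine_farkas :
  exists u : 'cV[R]_m, [/\ forall i, 0 <= u i 0, A^T *m u = c & lin b u <= d].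
Proof.
have [w [w0 sum1 sum2]] := farkas dual_system_infeasible.
have wf_gt0 : 0 < w (inr false).
  move: sum2; rewrite big_sumType big_bool /= big1 => [|i _]; last by rewrite mulr0.
  lra.
rewrite big_sumType big_bool /= in sum1.
pose u := \col_i w (inl i).
have top : A^T *m u = w (inr false) *: c.
  have := congr1 usubmx sum1; rewrite linear0 linearD linear_sum /=.
  under eq_bigr do rewrite linearZ /= col_mxKu.
  rewrite linearD !linearZ /= linearN /= !col_mxKu scaler0 add0r scalerN.
  by move/eqP; rewrite subr_eq0 mulmx_tr_sum => /eqP <-; apply: eq_bigr => i _; rewrite mxE.
have bot : lin b u + w (inr true) = w (inr false) * d.
  have := congr1 (fun z => dsubmx z 0 0) sum1; rewrite /= linear0 linearD linear_sum /=.
  under eq_bigr do rewrite linearZ /= col_mxKd.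
  rewrite linearD !linearZ /= linearN /= !col_mxKd.
  rewrite !mxE summxE linE eqxx mulr1 mulr1n mulrN addrA => /eqP; rewrite subr_eq0 => /eqP <-.
  by congr (_ + _); apply: eq_bigr => i _; rewrite !mxE eqxx mulr1n mulrC.
exists ((w (inr false))^-1 *: u); split.
- by move=> i; rewrite !mxE; apply: mulr_ge0 (w0 _); rewrite invr_ge0 ltW.
- by rewrite -scalemxAr top scalerA mulVf ?gt_eqF ?scale1r.
- rewrite linZr ler_pdivrMl //; have := w0 (inr true); lra.
Qed.

End Duality.

Lemma tr_kernel_nonzero (F : fieldType) k p (M : 'M[F]_(k, p)) :
  ~~ row_free M -> exists2 w : 'cV[F]_k, M^T *m w = 0 & w != 0.
Proof.
rewrite -kermx_eq0 => /rowV0Pn[v /sub_kermxP vM v0]; exists v^T; last by rewrite trmx_eq0.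
by rewrite -[LHS]trmxK trmx_mul !trmxK vM linear0.
Qed.

Lemma mulmx_tr_row' (R : nzRingType) k p (M : 'M[R]_(k.+1, p)) (u : 'cV[R]_k.+1) i0 :
  u i0 0 = 0 -> M^T *m u = (row' i0 M)^T *m row' i0 u.
Proof.
move=> u0; apply/matrixP => i j; rewrite (ord1 j) !mxE (bigD1_ord i0) //= u0 mulr0 add0r.
by apply: eq_bigr => l _; rewrite !mxE.
Qed.

Lemma ratio_test (R : realFieldType) k (u w : 'cV[R]_k) :
  (forall i, 0 <= u i 0) -> (exists i, w i 0 < 0) ->
  exists t i0, [/\ 0 <= t, forall i, 0 <= (u + t *: w) i 0 & (u + t *: w) i0 0 = 0].
Proof.
move=> u0 [i1 wi1].
have [i0 wi0 t_min] := @arg_minP _ _ _ i1 (fun i => w i 0 < 0) (fun i => u i 0 / - w i 0) wi1.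
exists (u i0 0 / - w i0 0), i0; split.
- by rewrite divr_ge0 // oppr_ge0 ltW.
- move=> i; rewrite !mxE; case: (ltP (w i 0) 0) => [wi|wi].
    have := t_min i wi; rewrite ler_pdivlMr ?oppr_gt0 // mulrN; lra.
  by rewrite addr_ge0 ?u0 // mulr_ge0 // divr_ge0 ?u0 // oppr_ge0 ltW.
- by rewrite !mxE invrN mulrN mulNr mulfVK ?subrr ?lt_eqF.
Qed.

Section BasicDualSolution.
Local Open Scope classical_set_scope.
Variables (R : realType) (m n : nat) (A : 'M[R]_(m, n)) (b : 'cV[R]_m).
Hypothesis P_nonempty : polyhedron A b !=set0.
Variables (c : 'cV[R]_n) (d : R).

Definition dual_feasible k (f : 'I_k -> 'I_m) (u : 'cV[R]_k) :=
  [/\ forall i, 0 <= u i 0, (rowsub f A)^T *m u = c & lin (rowsub f b) u <= d].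

Lemma kernel_lin_ge0 k (f : 'I_k -> 'I_m) (w : 'cV[R]_k) :
  (rowsub f A)^T *m w = 0 -> (forall i, 0 <= w i 0) -> 0 <= lin (rowsub f b) w.
Proof.
move=> Aw0 w0; have [y Py] := P_nonempty.
have -> : 0 = lin (rowsub f A *m y) w by rewrite /lin trmx_mul -mulmxA Aw0 mulmx0 mxE.
rewrite !linE; apply: ler_sum => i _; rewrite ler_wpM2r // mul_rowsub_mx.
by rewrite [rowsub f (A *m y) _ _]mxE [rowsub f b _ _]mxE; apply: Py.
Qed.

Lemma descent_direction k (f : 'I_k -> 'I_m) : ~~ row_free (rowsub f A) ->
  exists w : 'cV[R]_k,
    [/\ (rowsub f A)^T *m w = 0, lin (rowsub f b) w <= 0 & exists i, w i 0 < 0].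
Proof.
move=> /tr_kernel_nonzero[v Av0 v0].
have [w [Aw0 bw0 w0]] :
    exists w, [/\ (rowsub f A)^T *m w = 0, lin (rowsub f b) w <= 0 & w != 0].
  case: (lerP (lin (rowsub f b) v) 0) => bv; first by exists v.
  by exists (- v); rewrite mulmxN Av0 oppr0 linNr oppr_le0 oppr_eq0 ltW.
case: (boolP [exists i, w i 0 < 0]) => [/existsP wneg|/existsPn wpos]; first by exists w.
have w_ge0 i : 0 <= w i 0 by rewrite leNgt wpos.
have bw : lin (rowsub f b) w = 0 by apply/eqP; rewrite eq_le bw0 kernel_lin_ge0.
have [i wi] : exists i, w i 0 != 0.
  apply/existsP; apply: contraNT w0 => /existsPn w_eq0; apply/eqP/matrixP => i j.
  by rewrite (ord1 j) mxE; apply/eqP/negbNE/w_eq0.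
exists (- w); split; first by rewrite mulmxN Aw0 oppr0.
  by rewrite linNr bw oppr0.
by exists i; rewrite mxE oppr_lt0 lt_def wi w_ge0.
Qed.

Lemma dual_support_shrink k (f : 'I_k.+1 -> 'I_m) u :
  dual_feasible f u -> ~~ row_free (rowsub f A) ->
  exists i0 (u' : 'cV[R]_k), dual_feasible (f \o lift i0) u'.
Proof.
move=> [u0 Au bu] /descent_direction[w [Aw0 bw0 wneg]].
have [t [i0 [t0 ut0 uti0]]] := ratio_test u0 wneg.
exists i0, (row' i0 (u + t *: w)); split.
- by move=> i; rewrite mxE; apply: ut0.
- by rewrite rowsub_comp -row'Esub -mulmx_tr_row' // mulmxDr -scalemxAr Aw0 scaler0 addr0.
- rewrite /lin rowsub_comp -row'Esub -mulmx_tr_row' // -/(lin _ _) linDr linZr.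
  by have := mulr_ge0_le0 t0 bw0; lra.
Qed.

Lemma dual_basic_solution k (f : 'I_k -> 'I_m) u : injective f -> dual_feasible f u ->
  exists k' (f' : 'I_k' -> 'I_m) u',
    [/\ injective f', dual_feasible f' u' & row_free (rowsub f' A)].
Proof.
elim: k f u => [|k IH] f u finj feas.
  by exists 0, f, u; split => //; apply: inj_row_free => v _; apply: thinmx0.
case: (boolP (row_free (rowsub f A))) => free; first by exists k.+1, f, u.
have [i0 [u' feas']] := dual_support_shrink feas free.
exact: IH _ _ (inj_comp finj (@lift_inj _ i0)) feas'.
Qed.

End BasicDualSolution.

Lemma det_mxsub_le_Delta m n (A : 'M[int]_(m, n)) p
    (f : 'I_p.+1 -> 'I_m) (g : 'I_p.+1 -> 'I_n) :
  injective f -> injective g -> (`|\det (mxsub f g A)|%N <= Delta A)%N.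
Proof.
move=> finj ginj.
have := leq_card f finj; have := leq_card g ginj; rewrite !card_ord => pn pm.
have p_lt : (p < minn m n)%N by rewrite leq_min pm pn.
apply: leq_trans (leq_bigmax_cond (F := fun k : 'I_(minn m n) =>
  \max_(f : {ffun 'I_k.+1 -> 'I_m} | injectiveb f)
    \max_(g : {ffun 'I_k.+1 -> 'I_n} | injectiveb g) `|\det (mxsub f g A)|%N) (Ordinal p_lt) isT).
apply: leq_trans (leq_bigmax_cond [ffun x => f x] _); last first.
  by apply/injectiveP => x y; rewrite !ffunE => /finj.
apply: leq_trans (leq_bigmax_cond [ffun x => g x] _); last first.
  by apply/injectiveP => x y; rewrite !ffunE => /ginj.
by rewrite mxsub_ffun.
Qed.

Lemma ler_sum_inj (R : numDomainType) k n (g : 'I_k -> 'I_n) (F : 'I_n -> R) :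
  injective g -> (forall j, 0 <= F j) -> \sum_l F (g l) <= \sum_j F j.
Proof.
move=> ginj F0; rewrite -(big_imset _ (in2W ginj)) /=.
by rewrite [leRHS](bigID (mem (g @: xpredT)%SET)) /= lerDl sumr_ge0.
Qed.

Section CramerBound.
Variables (R : realType) (m n : nat) (A : 'M[int]_(m, n)).

Notation intmx M := (map_mx (intr : {rmorphism int -> R}) M).
Notation AR := (@mxR R m n A).

Lemma adj_entry_le_Delta k (f : 'I_k.+1 -> 'I_m) (g : 'I_k.+1 -> 'I_n) :
  injective f -> injective g -> \det (mxsub f g A) != 0 ->
  forall i l, `|\adj (intmx (mxsub f g A)^T) i l| <= (Delta A)%:R.
Proof.
move=> finj ginj det0 i l.
rewrite mxE /cofactor normrM normrX normrN1 expr1n mul1r.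
case: k f g finj ginj det0 i l => [|k] f g finj ginj det0 i l.
  rewrite det_mx00 normr1 ler1n; apply: leq_trans (det_mxsub_le_Delta A finj ginj).
  by rewrite absz_gt0.
have -> : row' l (col' i (intmx (mxsub f g A)^T)) = intmx (mxsub (f \o lift i) (g \o lift l) A)^T.
  by apply/matrixP => x y; rewrite !mxE.
rewrite det_map_mx det_tr -intr_norm -natr_absz ler_nat det_mxsub_le_Delta //.
  exact: inj_comp finj (@lift_inj _ i).
exact: inj_comp ginj (@lift_inj _ l).
Qed.

Lemma row_free_dual_entry_le k (f : 'I_k.+1 -> 'I_m) (u : 'cV[R]_k.+1) (c : 'cV[R]_n) :
  injective f -> (rowsub f AR)^T *m u = c -> row_free (rowsub f AR) ->
  forall i, `|u i 0| <= (Delta A)%:R * norm1 c.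
Proof.
move=> finj Au free i; set B := rowsub f AR in Au free.
have fullBT : row_full B^T by rewrite /row_full mxrank_tr; exact: free.
pose g := fullrankfun fullBT; have ginj : injective g := @fullrankfun_inj _ _ _ _ fullBT.
have GE : rowsub g B^T = intmx (mxsub f g A)^T by apply/matrixP => l j; rewrite !mxE.
set G := intmx (mxsub f g A)^T in GE.
have det0 : \det (mxsub f g A) != 0.
  by have := fullrowsub_unit fullBT; rewrite GE unitmxE unitfE det_map_mx det_tr intr_eq0.
have det_ge1 : 1 <= `|\det G| by rewrite det_map_mx det_tr -intr_norm -natr_absz ler1n absz_gt0.
have cramer : \det G *: u = \adj G *m rowsub g c.
  by rewrite -GE -Au -mul_rowsub_mx mulmxA mul_adj_mx mul_scalar_mx.
apply: le_trans (_ : `|\det G| * `|u i 0| <= _); first by rewrite ler_peMl.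
rewrite -normrM (_ : \det G * u i 0 = (\det G *: u) i 0); last by rewrite mxE.
rewrite cramer mxE.
apply: le_trans (ler_norm_sum _ _ _) _; rewrite /norm1 mulr_sumr.
apply: le_trans _ (ler_sum_inj (F := fun j => (Delta A)%:R * `|c j 0|) ginj _) => [|j]; last first.
  by rewrite mulr_ge0.
apply: ler_sum => l _; rewrite normrM [rowsub g c _ _]mxE ler_wpM2r //.
exact: adj_entry_le_Delta.
Qed.

Lemma row_free_dual_sum_le k (f : 'I_k -> 'I_m) (u : 'cV[R]_k) (c : 'cV[R]_n) :
  injective f -> (forall i, 0 <= u i 0) -> (rowsub f AR)^T *m u = c ->
  row_free (rowsub f AR) -> \sum_i u i 0 <= n%:R * (Delta A)%:R * norm1 c.
Proof.
have c0 : 0 <= norm1 c by apply: sumr_ge0.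
case: k f u => [|k] f u finj u0 Au free; first by rewrite big_ord0 !mulr_ge0.
have kn : (k.+1 <= n)%N by rewrite -(eqP free) rank_leq_col.
apply: le_trans (_ : \sum_(i < k.+1) (Delta A)%:R * norm1 c <= _).
  by apply: ler_sum => i _; rewrite -(ger0_norm (u0 i)); apply: row_free_dual_entry_le Au free i.
by rewrite sumr_const card_ord -[_ *+ k.+1]mulr_natl mulrA ler_wpM2r // ler_wpM2r // ler_nat.
Qed.

End CramerBound.

Section RowSelection.
Variables (R : realType) (k m : nat) (f : 'I_k -> 'I_m) (u : 'cV[R]_k).

(* [rowsub f] is left multiplication by the selection matrix [rowsub f 1%:M]; its transpose
   spreads a weight vector on the selected rows back to all of ['I_m]. *)
Definition spread := (rowsub f 1%:M)^T *m u.

Lemma mulmx_tr_spread n (A : 'M[R]_(m, n)) : A^T *m spread = (rowsub f A)^T *m u.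
Proof. by rewrite /spread mulmxA -trmx_mul -rowsubE. Qed.

Lemma lin_spread (b : 'cV[R]_m) : lin b spread = lin (rowsub f b) u.
Proof. by rewrite /lin mulmx_tr_spread. Qed.

Lemma spreadE i : spread i 0 = \sum_(j | f j == i) u j 0.
Proof.
rewrite mxE [RHS]big_mkcond; apply: eq_bigr => j _.
by rewrite !mxE eq_sym; case: eqP; rewrite ?mul1r ?mul0r.
Qed.

Lemma spread_ge0 : (forall j, 0 <= u j 0) -> forall i, 0 <= spread i 0.
Proof. by move=> u0 i; rewrite spreadE sumr_ge0. Qed.

Lemma sum_spread : \sum_i spread i 0 = \sum_j u j 0.
Proof. by under eq_bigr do rewrite spreadE; rewrite [RHS](partition_big f xpredT). Qed.

End RowSelection.

Section Certificate.
Local Open Scope classical_set_scope.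
Variables (R : realType) (m n : nat) (A : 'M[int]_(m, n)) (b : 'cV[R]_m).
Notation AR := (@mxR R m n A).
Hypothesis P_nonempty : polyhedron AR b !=set0.

Theorem small_dual_certificate (c : 'cV[R]_n) (d : R) :
  (forall y, polyhedron AR b y -> lin c y <= d) ->
  exists u : 'cV[R]_m, [/\ forall i, 0 <= u i 0, AR^T *m u = c, lin b u <= d
    & \sum_i u i 0 <= n%:R * (Delta A)%:R * norm1 c].
Proof.
move=> c_le_d; have [u [u0 Au bu]] := affine_farkas P_nonempty c_le_d.
have rowsub_id p (M : 'M[R]_(m, p)) : rowsub id M = M by apply/matrixP => i j; rewrite mxE.
have feas : dual_feasible AR b c d id u by split; rewrite ?rowsub_id.
have [k [f [v [finj [v0 Av bv] free]]]] := dual_basic_solution P_nonempty (fun _ _ => id) feas.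
exists (spread f v); split.
- exact: spread_ge0.
- by rewrite mulmx_tr_spread.
- by rewrite lin_spread.
- by rewrite sum_spread; apply: row_free_dual_sum_le Av free.
Qed.

End Certificate.

Section ConvexHull.
Local Open Scope classical_set_scope.
Variables (R : realType) (n : nat) (T : set 'cV[R]_n).

Lemma conv_nonempty : conv T !=set0 -> T !=set0.
Proof.
move=> [_ [[|k] [w [p [_ w1 Tp _]]]]]; last by exists (p ord0).
by move: w1; rewrite big_ord0 => /esym/eqP; rewrite oner_eq0.
Qed.

Lemma conv_lin_ge (a : 'cV[R]_n) v y :
  (forall x, T x -> v <= lin a x) -> conv T y -> v <= lin a y.
Proof.
move=> Tv [k [w [p [w0 w1 Tp ->]]]]; rewrite lin_sumr.
rewrite -[v]mul1r -w1 mulr_suml; apply: ler_sum => i _.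
by rewrite ler_wpM2l ?Tv.
Qed.

End ConvexHull.

Section DualBound.
Variables (R : realType) (m n : nat).
Implicit Types (u beta : 'cV[R]_m).

Lemma lin_ge_dual (A : 'M[R]_(m, n)) (a x : 'cV[R]_n) u beta :
  (forall i, 0 <= u i 0) -> A^T *m u = - a -> (forall i, (A *m x) i 0 <= beta i 0) ->
  - lin beta u <= lin a x.
Proof.
move=> u0 Au Axb; rewrite -[a]opprK linNl -Au lerN2.
have -> : lin (A^T *m u) x = lin u (A *m x) by rewrite /lin trmx_mul trmxK mulmxA.
by rewrite !linE; apply: ler_sum => i _; rewrite [leRHS]mulrC ler_wpM2l.
Qed.

Lemma lin_le_shift u beta (b : 'cV[R]_m) delta :
  (forall i, 0 <= u i 0) -> (forall i, beta i 0 <= b i 0 + delta) ->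
  lin beta u <= lin b u + delta * \sum_i u i 0.
Proof.
move=> u0 beta_le; rewrite !linE mulr_sumr -big_split; apply: ler_sum => i _ /=.
by rewrite -mulrDl ler_wpM2r.
Qed.

Lemma norm1N (v : 'cV[R]_m) : norm1 (- v) = norm1 v.
Proof. by apply: eq_bigr => j _; rewrite mxE normrN. Qed.

Lemma norminf_ge0 (v : 'cV[R]_m) : 0 <= norminf v.
Proof. by rewrite /norminf; elim/big_ind: _ => //= x y x0 y0; rewrite le_max x0. Qed.

Lemma le_add_norminf (b b' : 'cV[R]_m) i : b' i 0 <= b i 0 + norminf (b - b').
Proof.
have /lerNnormlW : `|(b - b') i 0| <= norminf (b - b').
  exact: (le_bigmax 0 (fun i => `|(b - b') i 0|)).
by rewrite !mxE; lra.
Qed.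

End DualBound.

Unset Implicit Arguments.
Local Open Scope classical_set_scope.

Theorem theorem4p3 (R : realType) (m n : nat)
  (alpha : 'cV[int]_n) (S : set 'cV[R]_n)
  (A : 'M[int]_(m, n)) (b : 'cV[R]_m) (b' : 'cV[R]_m) :
  convex_set S ->
  conv (S `&` @Zpts R n) = polyhedron (mxR A) b ->
  polyhedron (mxR A) b !=set0 ->
  rec_cone S = polyhedron (mxR A) 0 ->
  (exists M : R, forall x, S x -> M <= lin (mxR alpha) x) ->
  (forall i : 'I_m, has_ubound [set lin (mxR (row i A)^T) x | x in S]) ->
  (forall i : 'I_m, b' i 0 = sup [set lin (mxR (row i A)^T) x | x in S]) ->
  inf [set lin (mxR alpha) x | x in S `&` @Zpts R n]
    - inf [set lin (mxR alpha) x | x in S]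
  <= n%:R * norm1 (mxR alpha) * (Delta A)%:R * (1 + norminf (b - b')).
Proof.
move=> _ hull P0 _ [M alpha_lb] b'_ub b'_sup.
set v := inf _; set delta := norminf _; set K := n%:R * norm1 (mxR alpha) * (Delta A)%:R.
have [x0 Zx0] : S `&` @Zpts R n !=set0 by apply: conv_nonempty; rewrite hull.
have v_le y : polyhedron (mxR A) b y -> lin (- mxR alpha) y <= - v.
  rewrite -hull linNl lerN2; apply: conv_lin_ge => x Zx; apply: ge_inf; last by exists x.
  by exists M => _ [z [Sz _] <-]; apply: alpha_lb.
have [u [u0 Au bu u_sum]] := small_dual_certificate P0 v_le.
rewrite norm1N mulrAC -/K in u_sum.
have Ax_le_b' x : S x -> forall i, (mxR A *m x) i 0 <= b' i 0.
  move=> Sx i; rewrite b'_sup -lin_row; apply: ub_le_sup => //; exists x => //.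
  by rewrite /mxR -map_trmx map_row.
have S_ge x : S x -> v - delta * K <= lin (mxR alpha) x.
  move=> Sx; have := lin_ge_dual u0 Au (Ax_le_b' x Sx).
  have := lin_le_shift u0 (le_add_norminf b b').
  have := ler_wpM2l (norminf_ge0 (b - b')) u_sum; rewrite -/delta; lra.
have : v - delta * K <= inf [set lin (mxR alpha) x | x in S].
  apply: lb_le_inf => [|_ [x Sx <-]]; last exact: S_ge.
  by exists (lin (mxR alpha) x0), x0; case: Zx0.
have : 0 <= K by rewrite !mulr_ge0 ?sumr_ge0.
nra.
Qed.
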